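(* Let $\tau=\tfrac12(1+\sqrt5)$ and $\sigma=\tfrac12(1-\sqrt5)$, and consider the five pairs $(X^{\mathrm{aff}},H_m)\in\{(E_8^=,H_4),(D_6^=,H_3),(D_6^<,H_3),(D_6^>,H_3),(A_4^=,H_2)\}$, with the crystallographic space $V_n$ (where $n=8,6,6,6,4$ respectively), affine root $\alpha_0\in V_n$, projections $\pi_\parallel,\pi_\perp$ and vectors $a_i,\bar a_i$ as described in the context. Put $a_0:=\pi_\parallel(\alpha_0)$ and let $\hat A$ be the $(m+1)\times(m+1)$ matrix $\hat A_{ij}=2\frac{(a_i\mid a_j)}{(a_i\mid a_i)}$, $0\le i,j\le m$ (the induced Cartan matrix). Then in each of the five cases: $a_0\neq 0$; $\hat A_{ii}=2$; every off-diagonal entry of $\hat A$ is a non-positive element of $\mathbb{Q}[\tau]=\{p+q\tau: p,q\in\mathbb{Q}\}$ (and lies in $\mathbb{Z}[\tau]=\{p+q\tau:p,q\in\mathbb{Z}\}$ in the three cases $E_8^=,D_6^=,A_4^=$); $\hat A_{ij}=0$ if and only if $\hat A_{ji}=0$; and $\det\hat A=0$. Thus $\hat A$ is an affine extension of the Cartan matrix of $H_m$ (its lower right $m\times m$ block). Moreover, if $\bar a_0:=\pi_\perp(\alpha_0)$ and $\bar{\hat A}_{ij}=2\frac{(\bar a_i\mid \bar a_j)}{(\bar a_i\mid \bar a_i)}$, then the coefficients of $\bar a_0$ in the basis $\bar a_1,\dots,\bar a_m$ are the Galois conjugates of the coefficients of $a_0$ in the basis $a_1,\dots,a_m$, and $\bar{\hat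 A}$ is the entrywise Galois conjugate of $\hat A$.
   Context: Galois conjugation on $\mathbb{Q}[\tau]$ is the field automorphism $x\mapsto\bar x$ exchanging $\tau$ and $\sigma$ (note $\tau^2=\tau+1$, $\sigma^2=\sigma+1$). Non-crystallographic side ($m\in\{2,3,4\}$): $a_1,\dots,a_m$ are vectors in Euclidean space $\mathbb{R}^m$ with inner product $(\cdot\mid\cdot)$, all with $(a_i\mid a_i)=1$ and with the following other inner products (all unlisted ones are $0$). $H_4$: $(a_1\mid a_2)=(a_2\mid a_3)=-\tfrac12$, $(a_3\mid a_4)=-\tfrac{\tau}{2}$. $H_3$: $(a_1\mid a_2)=-\tfrac12$, $(a_2\mid a_3)=-\tfrac{\tau}{2}$. $H_2$: $(a_1\mid a_2)=-\tfrac{\tau}{2}$. (These are simple roots of the standard representations of $H_4,H_3,H_2$; e.g. for $H_4$ one may take $a_1=\frac12(-\sigma,-\tau,0,-1)$, $a_2=\frac12(0,-\sigma,-\tau,1)$, $a_3=\frac12(0,1,-\sigma,-\tau)$, $a_4=\frac12(0,-1,-\sigma,\tau)$.) The vectors $\bar a_1,\dots,\bar a_m$ are defined in the same way but with every $\tau$ in these inner products replaced by $\sigma$ (simple roots of the non-standard representation). Crystallographic side: $V_n$ is a real vector space with basis $\alpha_1,\dots,\alpha_n$ (simple roots). The Dynkin diagrams are labelled as follows: $A_4$: chain $\alpha_1-\alpha_2-\alpha_3-\alpha_4$; $D_6$: chain $\alpha_1-\alpha_2-\alpha_3-\alpha_4-\alpha_5$ with $\alpha_6$ joined to $\alpha_4$;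 $E_8$: chain $\alpha_1-\cdots-\alpha_7$ with $\alpha_8$ joined to $\alpha_5$. The affine roots are the elements of $V_n$ given by: $E_8^=$: $-\alpha_0=2\alpha_1+3\alpha_2+4\alpha_3+5\alpha_4+6\alpha_5+4\alpha_6+2\alpha_7+3\alpha_8$; $D_6^=$: $-\alpha_0=\alpha_1+2\alpha_2+2\alpha_3+2\alpha_4+\alpha_5+\alpha_6$; $D_6^<$: $-\alpha_0=\alpha_1+\alpha_2+\alpha_3+\alpha_4+\tfrac12\alpha_5+\tfrac12\alpha_6$; $D_6^>$: $-\alpha_0=2\alpha_1+2\alpha_2+2\alpha_3+2\alpha_4+\alpha_5+\alpha_6$; $A_4^=$: $-\alpha_0=\alpha_1+\alpha_2+\alpha_3+\alpha_4$. Projections: $\pi_\parallel:V_n\to\mathbb{R}^m$ is the linear map given on the basis by: for $E_8\to H_4$: $\alpha_1\mapsto a_1$, $\alpha_2\mapsto a_2$, $\alpha_3\mapsto a_3$, $\alpha_4\mapsto\tau a_4$, $\alpha_5\mapsto\tau a_3$, $\alpha_6\mapsto\tau a_2$, $\alpha_7\mapsto\tau a_1$, $\alpha_8\mapsto a_4$; for $D_6\to H_3$: $\alpha_1\mapsto a_1$, $\alpha_2\mapsto a_2$, $\alpha_3\mapsto\tau a_3$, $\alpha_4\mapsto\tau a_2$, $\alpha_5\mapsto\tau a_1$, $\alpha_6\mapsto a_3$; for $A_4\to H_2$: $\alpha_1\mapsto a_1$, $\alpha_2\mapsto\tau a_2$, $\alpha_3\mapsto\tau a_1$, $\alpha_4\mapsto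 a_2$. The projection $\pi_\perp$ is defined by the same formulas with $\tau$ replaced by $\sigma$ and each $a_i$ replaced by $\bar a_i$. *)

From HB Require Import structures.
From mathcomp Require Import all_boot all_order all_algebra.
Set Implicit Arguments. Unset Strict Implicit. Unset Printing Implicit Defensive.
Import Order.TTheory GRing.Theory Num.Theory.
Local Open Scope ring_scope.

Section Defs.
Variable R : rcfType.

Definition tau : R := (1 + Num.sqrt 5) / 2.
Definition sigma : R := (1 - Num.sqrt 5) / 2.

Definition dot m (u v : 'rV[R]_m) : R := (u *m v^T) 0 0.

Definition inQtau (x : R) : Prop := exists p q : rat, x = ratr p + ratr q * tau.
Definition inZtau (x : R) : Prop := exists p q : int, x = p%:~R + q%:~R * tau.

Definition galconj (x y : R) : Prop :=
  exists p q : rat, x = ratr p + ratr q * tau /\ y = ratr p + ratr q * sigma.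

(* Gram matrix of simple roots of H_m (m = 2,3,4), chain diagram, indices
   0..m-1 standing for 1..m; the last link carries -t/2, the others -1/2.
   With t = tau: standard representation; with t = sigma: non-standard. *)
Definition gramH m (t : R) (i j : 'I_m) : R :=
  if i == j then 1
  else if (i.+1 == j) || (j.+1 == i) then
         (if maxn i j == m.-1 then - t / 2 else - (1 / 2))
       else 0.

Definition hasGram m (t : R) (a : 'I_m -> 'rV[R]_m) : Prop :=
  forall i j, dot (a i) (a j) = gramH t i j.

Definition aat m (a : 'I_m -> 'rV[R]_m) (k : nat) : 'rV[R]_m :=
  if insub k is Some i then a i else 0.

(* Data for alpha_0 and the projection: one triple per simple root alpha_k
   (k = 1..n, in order): (c_k, idx_k, s_k) where
     -alpha_0 = sum_k c_k alpha_k   and   pi(alpha_k) = (t if s_k else 1) * a_(idx_k).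
   proj t a data = pi(alpha_0). *)
Definition proj m (t : R) (a : 'I_m -> 'rV[R]_m) (data : seq (rat * nat * bool))
  : 'rV[R]_m :=
  - \sum_(d <- data) ((ratr d.1.1 * (if d.2 then t else 1)) *: aat a d.1.2).

Definition ext m (a0 : 'rV[R]_m) (a : 'I_m -> 'rV[R]_m) (i : 'I_m.+1) : 'rV[R]_m :=
  if unlift ord0 i is Some j then a j else a0.

Definition cartanHat m (a0 : 'rV[R]_m) (a : 'I_m -> 'rV[R]_m) : 'M[R]_m.+1 :=
  \matrix_(i, j) (2 * dot (ext a0 a i) (ext a0 a j) / dot (ext a0 a i) (ext a0 a i)).

Definition affine_ext_ok m (integral : bool) (data : seq (rat * nat * bool)) : Prop :=
  forall a abar : 'I_m -> 'rV[R]_m,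
    hasGram tau a -> hasGram sigma abar ->
    let a0 := proj tau a data in
    let ab0 := proj sigma abar data in
    let A := cartanHat a0 a in
    let Ab := cartanHat ab0 abar in
    [/\ a0 != 0, forall i, A i i = 2,
        (forall i j, i != j ->
          [/\ inQtau (A i j), A i j <= 0 & (integral -> inZtau (A i j))]),
        (forall i j, A i j = 0 <-> A j i = 0)
      & \det A = 0] /\
    [/\ exists c cb : 'I_m -> R,
          [/\ a0 = \sum_i c i *: a i, ab0 = \sum_i cb i *: abar i
            & forall i, galconj (c i) (cb i)]
      & forall i j, galconj (A i j) (Ab i j)].


End Defs.

Local Open Scope ring_scope.
(* E8^= -> H4: alpha_k |-> a1,a2,a3,tau a4,tau a3,tau a2,tau a1,a4 ;
   -alpha_0 = 2a1+3a2+4a3+5a4+6a5+4a6+2a7+3a8 *)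
Definition dataE8eq : seq (rat * nat * bool) :=
  [:: (2%:Q, 0%N, false); (3%:Q, 1%N, false); (4%:Q, 2%N, false); (5%:Q, 3%N, true);
      (6%:Q, 2%N, true); (4%:Q, 1%N, true); (2%:Q, 0%N, true); (3%:Q, 3%N, false)].
(* D6 -> H3: alpha_k |-> a1,a2,tau a3,tau a2,tau a1,a3 *)
Definition dataD6 (c : seq rat) : seq (rat * nat * bool) :=
  zip (zip c [:: 0; 1; 2; 1; 0; 2]%N) [:: false; false; true; true; true; false].
Definition dataD6eq := dataD6 ([:: 1; 2; 2; 2; 1; 1] : seq rat).
Definition dataD6lt := dataD6 ([:: 1; 1; 1; 1; 1 / 2; 1 / 2] : seq rat).
Definition dataD6gt := dataD6 ([:: 2; 2; 2; 2; 1; 1] : seq rat).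
(* A4 -> H2: alpha_k |-> a1,tau a2,tau a1,a2 ; -alpha_0 = a1+a2+a3+a4 *)
Definition dataA4eq : seq (rat * nat * bool) :=
  [:: (1%:Q, 0%N, false); (1%:Q, 1%N, true); (1%:Q, 0%N, true); (1%:Q, 1%N, false)].

From HB Require Import structures.
From mathcomp Require Import all_boot all_order all_algebra.
From mathcomp Require Import ring lra.
Set Implicit Arguments. Unset Strict Implicit. Unset Printing Implicit Defensive.
Import Order.TTheory GRing.Theory Num.Theory.
Local Open Scope ring_scope.

(* A number p + q tau of Q[tau] is handled symbolically as the rational pair
   (p, q), with products reduced by tau^2 = tau + 1.  Since sigma satisfies the
   same relation, one symbolic computation evaluated at tau and at sigma gives a
   quantity and its Galois conjugate.  Writing a_0 = sum_i c_i a_i, with c_i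
   read off from the data of alpha_0, the Gram matrix of (a_0, a_1, ..., a_m),
   hence the induced Cartan matrix, is a symbolic expression in the c_i and the
   Gram matrix of H_m; its sign, zero pattern and integrality are then decided by
   computing with rationals, using 8/5 <= tau <= 17/10 for the signs.  The
   determinant vanishes because the relation a_0 - sum_i c_i a_i = 0 yields a
   nonzero vector in the left kernel of the Cartan matrix. *)

Section DotProduct.
Variables (R : rcfType) (m : nat).
Implicit Types u v : 'rV[R]_m.

Lemma dotE u v : dot u v = \sum_k u 0 k * v 0 k.
Proof. by rewrite /dot !mxE; apply: eq_bigr => k _; rewrite mxE. Qed.

Lemma dotC u v : dot u v = dot v u.
Proof. by rewrite !dotE; apply: eq_bigr => k _; rewrite mulrC. Qed.

Lemma dot0l v : dot 0 v = 0.
Proof. by rewrite dotE big1 // => k _; rewrite mxE mul0r. Qed.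

Lemma dotZl c u v : dot (c *: u) v = c * dot u v.
Proof. by rewrite !dotE mulr_sumr; apply: eq_bigr => k _; rewrite mxE mulrA. Qed.

Lemma dotZr c u v : dot u (c *: v) = c * dot u v.
Proof. by rewrite dotC dotZl dotC. Qed.

Lemma dot_suml I (r : seq I) (F : I -> 'rV[R]_m) v :
  dot (\sum_(i <- r) F i) v = \sum_(i <- r) dot (F i) v.
Proof.
rewrite dotE; under eq_bigr => k _ do rewrite summxE mulr_suml.
by rewrite exchange_big; apply: eq_bigr => i _; rewrite dotE.
Qed.

Lemma dot_sumr I (r : seq I) (F : I -> 'rV[R]_m) u :
  dot u (\sum_(i <- r) F i) = \sum_(i <- r) dot u (F i).
Proof. by rewrite dotC dot_suml; apply: eq_bigr => i _; rewrite dotC. Qed.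

End DotProduct.

Section CartanHatDet.
Variables (R : rcfType) (m : nat) (a0 : 'rV[R]_m) (a : 'I_m -> 'rV[R]_m).

Lemma det_cartanHat_eq0 (c : 'I_m -> R) : a0 = \sum_i c i *: a i ->
  (forall k, dot (ext a0 a k) (ext a0 a k) != 0) -> \det (cartanHat a0 a) = 0.
Proof.
move=> a0E nz; apply/eqP/det0P.
pose g k := dot (ext a0 a k) (ext a0 a k).
pose v k : R := if unlift ord0 k is Some i then - c i else 1.
exists (\row_k (v k * g k / 2)).
  apply/eqP => /matrixP /(_ 0 ord0); rewrite !mxE /v unlift_none mul1r.
  by apply/eqP; rewrite mulf_neq0 ?invr_eq0 ?pnatr_eq0 //; apply: nz.
apply/matrixP => z l; rewrite !mxE.
have -> : \sum_k (\row_k (v k * g k / 2)) z k * cartanHat a0 a k l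
          = dot (\sum_k v k *: ext a0 a k) (ext a0 a l).
  rewrite dot_suml; apply: eq_bigr => k _; rewrite !mxE dotZl.
  by have := nz k; rewrite -/(g k) => nzg; field.
rewrite big_ord_recl /v unlift_none scale1r.
under eq_bigr => i _ do rewrite liftK /ext liftK scaleNr.
by rewrite /ext unlift_none sumrN -a0E subrr dot0l.
Qed.

End CartanHatDet.

(* (p, q) stands for p + q tau *)
Definition qtau := (rat * rat)%type.

Definition qtau_add (x y : qtau) : qtau := (x.1 + y.1, x.2 + y.2).

Definition qtau_mul (x y : qtau) : qtau :=
  (x.1 * y.1 + x.2 * y.2, x.1 * y.2 + x.2 * y.1 + x.2 * y.2).

Definition qtau_norm (x : qtau) : rat := x.1 ^+ 2 + x.1 * x.2 - x.2 ^+ 2.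

Definition qtau_inv (x : qtau) : qtau :=
  ((x.1 + x.2) / qtau_norm x, - x.2 / qtau_norm x).

Definition qtau_sum (s : seq qtau) : qtau := foldr qtau_add (0, 0) s.

(* p + q tau < 0 at both ends of [8/5, 17/10], hence at tau *)
Definition qtau_neg (x : qtau) : bool :=
  (5 * x.1 + 8 * x.2 < 0) && (10 * x.1 + 17 * x.2 < 0).

Definition qtau_int (x : qtau) : bool := (denq x.1 == 1) && (denq x.2 == 1).

Section QtauEval.
Variables (R : rcfType) (t : R).
Hypothesis golden_t : t ^+ 2 = t + 1.

Definition qtau_eval (x : qtau) : R := ratr x.1 + ratr x.2 * t.

Lemma qtau_eval0 : qtau_eval (0, 0) = 0.
Proof. by rewrite /qtau_eval /= rmorph0 mul0r addr0. Qed.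

Lemma qtau_evalD x y : qtau_eval (qtau_add x y) = qtau_eval x + qtau_eval y.
Proof. by rewrite /qtau_eval /= !rmorphD /=; ring. Qed.

Lemma qtau_eval_sum I (s : seq I) (f : I -> qtau) :
  qtau_eval (qtau_sum (map f s)) = \sum_(i <- s) qtau_eval (f i).
Proof.
elim: s => [|i s IHs]; first by rewrite big_nil qtau_eval0.
by rewrite big_cons /= qtau_evalD IHs.
Qed.

Lemma qtau_evalM x y : qtau_eval (qtau_mul x y) = qtau_eval x * qtau_eval y.
Proof. by rewrite /qtau_eval /= !(rmorphD, rmorphM) /=; ring: golden_t. Qed.

Lemma qtau_evalKV x : qtau_norm x != 0 -> qtau_eval x * qtau_eval (qtau_inv x) = 1.
Proof.
rewrite /qtau_eval /qtau_inv /=; set N := qtau_norm x => nzN.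
have nzNR : ratr N != 0 :> R by rewrite fmorph_eq0.
have conjM : (ratr x.1 + ratr x.2 * t) * (ratr x.1 + ratr x.2 - ratr x.2 * t) = ratr N.
  by rewrite /N /qtau_norm !(rmorphD, rmorphB, rmorphM, rmorphXn) /=; ring: golden_t.
rewrite -(divff nzNR) -{1}conjM !fmorph_div rmorphD rmorphN /=.
by field.
Qed.

Lemma qtau_evalV x : qtau_norm x != 0 -> qtau_eval (qtau_inv x) = (qtau_eval x)^-1.
Proof. by move=> nzN; rewrite (mulr1_eq (qtau_evalKV nzN)). Qed.

Lemma qtau_eval_neq0 x : qtau_norm x != 0 -> qtau_eval x != 0.
Proof.
by move=> nzN; apply: contra_neq (oner_neq0 R) => x0; rewrite -(qtau_evalKV nzN) x0 mul0r.
Qed.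
End QtauEval.

Section GoldenRatio.
Variable R : rcfType.

Lemma sqrt5_sqr : Num.sqrt 5 ^+ 2 = 5 :> R.
Proof. by rewrite sqr_sqrtr // ler0n. Qed.

Lemma tau_golden : tau R ^+ 2 = tau R + 1.
Proof. by have := sqrt5_sqr; rewrite /tau; lra. Qed.

Lemma sigma_golden : sigma R ^+ 2 = sigma R + 1.
Proof. by have := sqrt5_sqr; rewrite /sigma; lra. Qed.

Lemma tau_bounds : 8 <= 5 * tau R /\ 10 * tau R <= 17.
Proof.
rewrite /tau; move: sqrt5_sqr (sqrtr_ge0 (5 : R)); move: (Num.sqrt 5) => s s2 s0.
have [lo hi] : 11 <= 5 * s /\ 5 * s <= 12 by split; nra.
by split; lra.
Qed.

Lemma qtau_eval_tau_lt0 x : qtau_neg x -> qtau_eval (tau R) x < 0.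
Proof.
have ratrE (c d : nat) :
    ratr (c%:R * x.1 + d%:R * x.2) = c%:R * ratr x.1 + d%:R * ratr x.2 :> R.
  by rewrite rmorphD !rmorphM !rmorph_nat.
case/andP; rewrite -!(ltrq0 R) !ratrE /qtau_eval.
have [lo hi] := tau_bounds; move: (ratr x.1) (ratr x.2) => p q h1 h2.
have [q0|q0] := lerP 0 q.
  have : 0 <= q * (17 - 10 * tau R) by apply: mulr_ge0; lra.
  lra.
have : 0 <= - q * (5 * tau R - 8) by apply: mulr_ge0; lra.
lra.
Qed.

Lemma qtau_eval_tau_int x : qtau_int x -> inZtau (qtau_eval (tau R) x).
Proof.
case/andP => /eqP d1 /eqP d2; exists (numq x.1), (numq x.2).
by rewrite /qtau_eval -!(ratr_int R (numq _)) !numqE d1 d2 !mulr1.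
Qed.

Lemma qtau_eval_tau_le0 x : (x == (0, 0)) || qtau_neg x -> qtau_eval (tau R) x <= 0.
Proof. by case/orP => [/eqP-> | /qtau_eval_tau_lt0/ltW //]; rewrite qtau_eval0. Qed.

Lemma qtau_eval_tau_eq0 x :
  (x == (0, 0)) || qtau_neg x -> (qtau_eval (tau R) x == 0) = (x == (0, 0)).
Proof.
case/orP => [/eqP-> | /qtau_eval_tau_lt0 lt0]; first by rewrite qtau_eval0 !eqxx.
by rewrite (negbTE (ltr0_neq0 lt0)); case: eqP lt0 => // ->; rewrite qtau_eval0 ltxx.
Qed.

End GoldenRatio.

Definition gramHq m (k l : nat) : qtau :=
  if k == l then (1, 0)
  else if (k.+1 == l) || (l.+1 == k) then
         (if maxn k l == m.-1 then (0, - (1 / 2)) else (- (1 / 2), 0))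
       else (0, 0).

Definition root_coord (data : seq (rat * nat * bool)) (i : nat) : qtau :=
  qtau_sum [seq if i == d.1.2 then (if d.2 then (0, - d.1.1) else (- d.1.1, 0))
                else (0, 0) | d <- data].

(* coordinates on a_1, ..., a_m (indices 0..m-1) of a_k, k = 0..m, where a_0 is
   the projection of alpha_0 *)
Definition ext_coord data (k i : nat) : qtau :=
  if k is k'.+1 then ((k' == i)%:R, 0) else root_coord data i.

Definition ext_gram m data (k l : nat) : qtau :=
  qtau_sum [seq qtau_sum [seq qtau_mul (qtau_mul (ext_coord data k i) (ext_coord data l j))
                                       (gramHq m i j) | j <- iota 0 m] | i <- iota 0 m].

Definition ext_cartan m data (k l : nat) : qtau :=
  qtau_mul (2, 0) (qtau_mul (ext_gram m data k l) (qtau_inv (ext_gram m data k k))).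

Section ExtendedGram.
Variables (R : rcfType) (m : nat) (t : R).
Hypothesis golden_t : t ^+ 2 = t + 1.
Variable a : 'I_m -> 'rV[R]_m.
Hypothesis gram_a : hasGram t a.
Variable data : seq (rat * nat * bool).

Lemma dot_gramHq (i j : 'I_m) : dot (a i) (a j) = qtau_eval t (gramHq m i j).
Proof.
rewrite gram_a /gramH /gramHq (inj_eq val_inj).
by do 3?case: ifP => _;
  rewrite /qtau_eval /= ?(rmorphN, rmorph0, rmorph1, fmorph_div, rmorph_nat); ring.
Qed.

Lemma aat_sum (k : nat) : aat a k = \sum_(i < m) ((i == k :> nat)%:R : R) *: a i.
Proof.
rewrite /aat; case: insubP => [i _ <-|hk].
  rewrite (bigD1 i) //= eqxx scale1r big1 ?addr0 // => j hj.
  by rewrite (inj_eq val_inj) (negbTE hj) scale0r.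
rewrite big1 // => j _; case: eqP => [e|]; last by rewrite scale0r.
by case/negP: hk; rewrite -e ltn_ord.
Qed.

Lemma proj_root_coord :
  proj t a data = \sum_(i < m) qtau_eval t (root_coord data i) *: a i.
Proof.
under eq_bigr => i _ do rewrite qtau_eval_sum scaler_suml.
rewrite exchange_big /proj -sumrN; apply: eq_bigr => d _.
rewrite aat_sum scaler_sumr -sumrN; apply: eq_bigr => i _.
rewrite scalerA -scaleNr; congr (_ *: _).
case: eqP => _; last by rewrite qtau_eval0 mulr0 oppr0.
by case: d.2; rewrite /qtau_eval /= !(rmorphN, rmorph0) /=; ring.
Qed.

Lemma ext_proj_sum (k : 'I_m.+1) :
  ext (proj t a data) a k = \sum_(i < m) qtau_eval t (ext_coord data k i) *: a i.
Proof.
rewrite /ext; case: unliftP => [j ->|->]; last exact: proj_root_coord.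
rewrite lift0 (bigD1 j) //= eqxx /qtau_eval /= rmorph1 rmorph0 mul0r addr0 scale1r.
rewrite big1 ?addr0 // => i ij.
rewrite (inj_eq val_inj) eq_sym (negbTE ij) /qtau_eval /=.
by rewrite !(rmorph0, mul0r, addr0, scale0r).
Qed.

Lemma dot_ext_proj (k l : 'I_m.+1) :
  dot (ext (proj t a data) a k) (ext (proj t a data) a l)
  = qtau_eval t (ext_gram m data k l).
Proof.
have sum_iota (F : nat -> R) : \sum_(i <- iota 0 m) F i = \sum_(i < m) F i.
  by rewrite -(big_mkord xpredT) /index_iota subn0.
rewrite !ext_proj_sum dot_suml /ext_gram qtau_eval_sum sum_iota.
apply: eq_bigr => i _.
rewrite dotZl dot_sumr qtau_eval_sum sum_iota mulr_sumr.
apply: eq_bigr => j _.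
by rewrite dotZr dot_gramHq !(qtau_evalM golden_t) mulrA.
Qed.

Lemma cartanHat_projE (k l : 'I_m.+1) : qtau_norm (ext_gram m data k k) != 0 ->
  cartanHat (proj t a data) a k l = qtau_eval t (ext_cartan m data k l).
Proof.
move=> nz; rewrite mxE !dot_ext_proj /ext_cartan !(qtau_evalM golden_t).
rewrite (qtau_evalV golden_t nz) /qtau_eval /= rmorph0 mul0r addr0.
by rewrite rmorph_nat mulrA.
Qed.

End ExtendedGram.

Definition cartan_offdiag_ok (integral : bool) (x y : qtau) : bool :=
  [&& (x == (0, 0)) == (y == (0, 0)), (x == (0, 0)) || qtau_neg x
    & integral ==> qtau_int x].

Definition affine_ext_check m (integral : bool) data : bool :=
  all (fun k => qtau_norm (ext_gram m data k k) != 0) (iota 0 m.+1) &&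
  all (fun k => all (fun l => (k == l) ||
         cartan_offdiag_ok integral (ext_cartan m data k l) (ext_cartan m data l k))
       (iota 0 m.+1)) (iota 0 m.+1).

Lemma affine_ext_checkP (R : rcfType) m integral data :
  affine_ext_check m integral data -> affine_ext_ok R m integral data.
Proof.
case/andP => /allP norm_ok /allP offdiag_ok a ab gram_a gram_ab a0 ab0 A Ab.
have iota_ord (k : 'I_m.+1) : val k \in iota 0 m.+1 by rewrite mem_iota ltn_ord.
have nzN (k : 'I_m.+1) : qtau_norm (ext_gram m data k k) != 0 := norm_ok _ (iota_ord k).
have AE i j : A i j = qtau_eval (tau R) (ext_cartan m data i j).
  by rewrite /A /a0 (cartanHat_projE (tau_golden R) gram_a j (nzN i)).
have AbE i j : Ab i j = qtau_eval (sigma R) (ext_cartan m data i j).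
  by rewrite /Ab /ab0 (cartanHat_projE (sigma_golden R) gram_ab j (nzN i)).
have nz_dot k : dot (ext a0 a k) (ext a0 a k) != 0.
  by rewrite (dot_ext_proj (tau_golden R) gram_a) (qtau_eval_neq0 (tau_golden R)).
have offdiag (i j : 'I_m.+1) : i != j ->
    cartan_offdiag_ok integral (ext_cartan m data i j) (ext_cartan m data j i).
  move=> ij; have := allP (offdiag_ok _ (iota_ord i)) _ (iota_ord j).
  by rewrite (inj_eq val_inj) (negbTE ij).
split; first split.
- apply/eqP => a00; have := nz_dot ord0.
  by rewrite /ext unlift_none a00 dot0l eqxx.
- by move=> i; rewrite /A mxE mulfK.
- move=> i j /offdiag /and3P [_ sgn integ]; rewrite AE; split.
  + by exists (ext_cartan m data i j).1, (ext_cartan m data i j).2.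
  + exact: qtau_eval_tau_le0.
  + by move=> /(implyP integ) /qtau_eval_tau_int.
- move=> i j; have [<- //|ij] := eqVneq i j.
  suff zz : (A i j == 0) = (A j i == 0).
    by split => /eqP h; apply/eqP; [rewrite -zz | rewrite zz].
  have ji : j != i by rewrite eq_sym.
  have /and3P [/eqP zz sgn_ij _] := offdiag _ _ ij.
  have /and3P [_ sgn_ji _] := offdiag _ _ ji.
  by rewrite !AE !qtau_eval_tau_eq0.
- exact: det_cartanHat_eq0 (proj_root_coord (tau R) a data) nz_dot.
split.
- exists (fun i => qtau_eval (tau R) (root_coord data i)).
  exists (fun i => qtau_eval (sigma R) (root_coord data i)).
  split; try exact: proj_root_coord.
  by move=> i; exists (root_coord data i).1, (root_coord data i).2.
- move=> i j; exists (ext_cartan m data i j).1, (ext_cartan m data i j).2.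
  by rewrite AE AbE.
Qed.

Theorem mainTheorem1 (R : rcfType) :
  [/\ affine_ext_ok R 4 true dataE8eq,
      affine_ext_ok R 3 true dataD6eq,
      affine_ext_ok R 3 false dataD6lt,
      affine_ext_ok R 3 false dataD6gt
    & affine_ext_ok R 2 true dataA4eq].
Proof. by split; apply: affine_ext_checkP; vm_compute. Qed.
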